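(* $\mathbf\Delta$ is an open subset of $\mathcal P(\mathcal H)\times\mathcal P(\mathcal H)$ (for the operator norm topology); in particular $\mathbf\Delta$ is a submanifold of $\mathcal P(\mathcal H)\times\mathcal P(\mathcal H)$.
   Context: $\mathcal H$ is a separable infinite-dimensional complex Hilbert space, $\mathcal B(\mathcal H)$ the bounded operators, $\mathcal P(\mathcal H)=\{P\in\mathcal B(\mathcal H):P=P^2=P^*\}$ with the norm topology (a $C^\infty$ submanifold of $\mathcal B(\mathcal H)$). For a closed subspace $\mathcal S$, $P_{\mathcal S}$ denotes the orthogonal projection onto $\mathcal S$. Two closed subspaces $\mathcal S,\mathcal T$ have a common complement if there is a closed subspace $\mathcal Z$ with $\mathcal S\cap\mathcal Z=\mathcal T\cap\mathcal Z=\{0\}$ and $\mathcal S+\mathcal Z=\mathcal T+\mathcal Z=\mathcal H$. $\mathbf\Delta=\{(P_{\mathcal S},P_{\mathcal T})\in\mathcal P(\mathcal H)\times\mathcal P(\mathcal H):\mathcal S,\mathcal T\text{ have a common complement}\}$. *)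

From HB Require Import structures.
From mathcomp Require Import all_boot all_order all_algebra.
From mathcomp Require Import complex.
From mathcomp Require Import boolp classical_sets reals.
Set Implicit Arguments. Unset Strict Implicit. Unset Printing Implicit Defensive.
Import Order.TTheory GRing.Theory Num.Theory.
Local Open Scope ring_scope.
Local Open Scope classical_set_scope.

Section Hilbert.
Variable R : realType.
Local Notation C := R[i].
Variable H : lmodType C.
Variable ip : H -> H -> C.

Definition hnorm (x : H) : R := Num.sqrt (complex.Re (ip x x)).

Definition is_inner_product : Prop :=
  [/\ (forall (a : C) (x y z : H), ip (a *: x + y) z = a * ip x z + ip y z),
      (forall x y : H, ip y x = conjc (ip x y)),
      (forall x : H, 0 <= ip x x) &
      (forall x : H, ip x x = 0 -> x = 0)].

Definition hconverges (u : nat -> H) (l : H) : Prop :=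
  forall eps : R, 0 < eps -> exists N, forall n, (N <= n)%N -> hnorm (u n - l) < eps.

Definition hcauchy (u : nat -> H) : Prop :=
  forall eps : R, 0 < eps ->
    exists N, forall n m, (N <= n)%N -> (N <= m)%N -> hnorm (u n - u m) < eps.

Definition hcomplete : Prop :=
  forall u : nat -> H, hcauchy u -> exists l, hconverges u l.

Definition hseparable : Prop :=
  exists d : nat -> H, forall (x : H) (eps : R), 0 < eps ->
    exists n, hnorm (x - d n) < eps.

Definition hinfinite_dim : Prop :=
  forall s : seq H, exists x : H,
    ~ exists c : 'I_(size s) -> C, x = \sum_(i < size s) c i *: s`_i.

Definition separable_inf_dim_hilbert : Prop :=
  [/\ is_inner_product, hcomplete, hseparable & hinfinite_dim].

Definition bounded_op (T : H -> H) : Prop :=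
  (forall (a : C) (x y : H), T (a *: x + y) = a *: T x + T y) /\
  (exists M : R, forall x, hnorm (T x) <= M * hnorm x).

Definition opnorm (T : H -> H) : R :=
  sup [set hnorm (T x) | x in [set x : H | hnorm x <= 1]].

Definition is_proj (P : H -> H) : Prop :=
  [/\ bounded_op P,
      (forall x, P (P x) = P x) &
      (forall x y, ip (P x) y = ip x (P y))].

Definition closed_subspace (S : set H) : Prop :=
  [/\ S 0,
      (forall (a : C) x y, S x -> S y -> S (a *: x + y)) &
      (forall (u : nat -> H) l, (forall n, S (u n)) -> hconverges u l -> S l)].

(* the range of an orthogonal projection P is the closed subspace S with P = P_S *)
Definition ran (P : H -> H) : set H := [set P x | x in setT].

Definition common_complement (S T : set H) : Prop :=
  exists Z : set H, [/\ closed_subspace Z,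
    S `&` Z = [set 0], T `&` Z = [set 0],
    (forall x, exists s z, [/\ S s, Z z & x = s + z]) &
    (forall x, exists t z, [/\ T t, Z z & x = t + z])].

Definition Delta (P Q : H -> H) : Prop :=
  [/\ is_proj P, is_proj Q & common_complement (ran P) (ran Q)].

Definition open_in_proj_pairs (D : (H -> H) -> (H -> H) -> Prop) : Prop :=
  forall P Q, D P Q -> exists eps : R, 0 < eps /\
    forall P' Q', is_proj P' -> is_proj Q' ->
      opnorm (fun x => P' x - P x) < eps ->
      opnorm (fun x => Q' x - Q x) < eps -> D P' Q'.

End Hilbert.

From mathcomp Require Import all_boot all_order all_algebra.
From mathcomp Require Import complex.
From mathcomp Require Import boolp classical_sets reals.
From mathcomp Require Import ring lra.
Set Implicit Arguments. Unset Strict Implicit. Unset Printing Implicit Defensive.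
Import Order.TTheory GRing.Theory Num.Theory.
Local Open Scope ring_scope.
Local Open Scope classical_set_scope.

(* Let Z be a common complement of S = ran P and T = ran Q.  By the open mapping
   theorem (derived here from Baire's theorem) the projection of H = S + Z onto S
   along Z is bounded: |s| <= K |s + z|.  If |P' - P| <= d with (K + 1) d <= 1/2,
   then for y = s + z the pair (P' s, z) in ran P' x Z reproduces y up to an error of
   norm <= |y| / 2; iterating and summing the resulting geometric series (using
   completeness) decomposes every y exactly along ran P' and Z, and the same estimate
   gives ran P' /\ Z = 0.  So Z stays a common complement of every pair near (P, Q). *)

Section InnerProductSpace.
Variables (R : realType) (H : lmodType R[i]) (ip : H -> H -> R[i]).
Hypothesis ipP : is_inner_product ip.

Local Notation nrm := (hnorm ip).
Local Notation rscale r := (GRing.scale (r%:C)%C).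

Definition rdot (x y : H) : R := complex.Re (ip x y).

Lemma ipD x y z : ip (x + y) z = ip x z + ip y z.
Proof. by case: ipP => lin _ _ _; rewrite -[x]scale1r lin scale1r mul1r. Qed.

Lemma ip0 z : ip 0 z = 0.
Proof. by apply/eqP; rewrite -(addrI _ (_ : ip 0 z + ip 0 z = ip 0 z + 0)) // -ipD !addr0. Qed.

Lemma ipZ a x z : ip (a *: x) z = a * ip x z.
Proof. by case: ipP => lin _ _ _; rewrite -[a *: x]addr0 lin ip0 addr0. Qed.

Lemma rdotD x y z : rdot (x + y) z = rdot x z + rdot y z.
Proof. by rewrite /rdot ipD; case: (ip x z) => ? ?; case: (ip y z). Qed.

Lemma rdotC x y : rdot x y = rdot y x.
Proof. by case: ipP => _ conj _ _; rewrite /rdot (conj y x); case: (ip y x). Qed.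

Lemma rdotZ r x z : rdot (rscale r x) z = r * rdot x z.
Proof. by rewrite /rdot ipZ; case: (ip x z) => a b /=; ring. Qed.

Lemma rdot0 z : rdot 0 z = 0.
Proof. by rewrite /rdot ip0. Qed.

Lemma rdotN x z : rdot (- x) z = - rdot x z.
Proof. by apply/eqP; rewrite -subr_eq0 opprK -rdotD addNr rdot0. Qed.

Lemma rdotB x y z : rdot (x - y) z = rdot x z - rdot y z.
Proof. by rewrite rdotD rdotN. Qed.

Lemma rdot_ge0 x : 0 <= rdot x x.
Proof. by case: ipP => _ _ pos _; have := pos x; rewrite lecE => /andP[]. Qed.

Lemma rdot_eq0 x : rdot x x = 0 -> x = 0.
Proof.
case: ipP => _ _ pos def Re0; apply: def; have := pos x; rewrite lecE => /andP[/eqP Im0 _].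
by move: Re0 Im0; rewrite /rdot; case: (ip x x) => a b /= -> ->.
Qed.

Lemma hnorm_ge0 x : 0 <= nrm x.
Proof. exact: sqrtr_ge0. Qed.

Lemma hnorm_sqr x : nrm x ^+ 2 = rdot x x.
Proof. by rewrite /hnorm sqr_sqrtr // rdot_ge0. Qed.

Lemma hnorm0 : nrm 0 = 0.
Proof. by rewrite /hnorm ip0 sqrtr0. Qed.

Lemma hnorm_eq0 x : nrm x = 0 -> x = 0.
Proof. by move=> nx0; apply: rdot_eq0; rewrite -hnorm_sqr nx0 expr0n. Qed.

Lemma hnorm_gt0 x : x != 0 -> 0 < nrm x.
Proof. by move=> /eqP nx0; rewrite lt_def hnorm_ge0 andbT; apply/eqP => /hnorm_eq0. Qed.

Lemma hnorm_le0 x : nrm x <= 0 -> x = 0.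
Proof. by move=> nx; apply: hnorm_eq0; apply/eqP; rewrite eq_le nx hnorm_ge0. Qed.

Lemma rdot_le_hnorm x y : rdot x y <= nrm x * nrm y.
Proof.
have [->|/hnorm_gt0 px] := eqVneq x 0; first by rewrite rdot0 hnorm0 mul0r.
have [->|/hnorm_gt0 py] := eqVneq y 0; first by rewrite rdotC rdot0 hnorm0 mulr0.
have := rdot_ge0 (rscale (nrm y) x - rscale (nrm x) y).
rewrite !rdotB ![rdot _ (_ - _)]rdotC !rdotB !rdotZ ![rdot _ (rscale _ _)]rdotC !rdotZ.
rewrite -!hnorm_sqr (rdotC y x) => h.
have : 0 <= 2 * nrm x * nrm y * (nrm x * nrm y - rdot x y) by nra.
by rewrite pmulr_rge0 ?subr_ge0 //; nra.
Qed.

Lemma hnormD x y : nrm (x + y) <= nrm x + nrm y.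
Proof.
rewrite -ler_sqr ?nnegrE ?addr_ge0 ?hnorm_ge0 //.
rewrite hnorm_sqr rdotD ![rdot _ (_ + _)]rdotC !rdotD -!hnorm_sqr (rdotC x y).
by have := rdot_le_hnorm y x; nra.
Qed.

Lemma hnormZ r x : nrm (rscale r x) = `|r| * nrm x.
Proof.
apply/eqP; rewrite -(@eqrXn2 _ 2) ?mulr_ge0 ?hnorm_ge0 //.
apply/eqP; rewrite exprMn real_normK ?num_real // !hnorm_sqr rdotZ rdotC rdotZ; ring.
Qed.

Lemma hnormN x : nrm (- x) = nrm x.
Proof.
have -> : - x = rscale (-1) x by rewrite rmorphN1 scaleN1r.
by rewrite hnormZ normrN normr1 mul1r.
Qed.

Lemma hnorm_distC x y : nrm (x - y) = nrm (y - x).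
Proof. by rewrite -hnormN opprB. Qed.

Lemma hnorm_distD x y z : nrm (x - z) <= nrm (x - y) + nrm (y - z).
Proof. by have := hnormD (x - y) (y - z); rewrite addrA subrK. Qed.

Lemma div_exp2_lt (c eps : R) : 0 < eps ->
  exists N, forall n, (N <= n)%N -> c / 2 ^+ n < eps.
Proof.
move=> eps0; exists (Num.Def.archi_bound (c / eps)) => n /upper_nthrootP cn.
by rewrite ltr_pdivrMr ?exprn_gt0 // mulrC -ltr_pdivrMr.
Qed.

Lemma hconverges_cst y : hconverges ip (fun=> y) y.
Proof. by move=> e e0; exists 0%N => n _; rewrite subrr hnorm0. Qed.

Lemma hconverges_unique u a b : hconverges ip u a -> hconverges ip u b -> a = b.
Proof.
move=> ua ub; apply/eqP; rewrite -subr_eq0; apply/eqP/hnorm_le0.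
apply/ler_addgt0Pr => e e0; rewrite add0r.
have e2 : 0 < e / 2 by rewrite divr_gt0.
have [N1 h1] := ua _ e2; have [N2 h2] := ub _ e2.
have := h1 _ (leq_maxl N1 N2); have := h2 _ (leq_maxr N1 N2).
have := hnorm_distD a (u (maxn N1 N2)) b; rewrite (hnorm_distC a (u _)); lra.
Qed.

Lemma hconvergesD u v a b : hconverges ip u a -> hconverges ip v b ->
  hconverges ip (fun n => u n + v n) (a + b).
Proof.
move=> ua vb e e0; have e2 : 0 < e / 2 by rewrite divr_gt0.
have [N1 h1] := ua _ e2; have [N2 h2] := vb _ e2.
exists (maxn N1 N2) => n; rewrite geq_max => /andP[n1 n2].
rewrite opprD addrACA; have := hnormD (u n - a) (v n - b).
by have := h1 n n1; have := h2 n n2; lra.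
Qed.

Lemma hconverges_dist_le u l c (r : R) N : hconverges ip u l ->
  (forall n, (N <= n)%N -> nrm (u n - c) <= r) -> nrm (l - c) <= r.
Proof.
move=> ul ur; apply/ler_addgt0Pr => e e0.
have [N1 h1] := ul _ e0.
have := h1 _ (leq_maxr N N1); have := ur _ (leq_maxl N N1).
by have := hnorm_distD l (u (maxn N N1)) c; rewrite (hnorm_distC l (u _)); lra.
Qed.

Hypothesis completeP : hcomplete ip.

Section GeometricIncrements.
Variables (u : nat -> H) (c : R).
Hypotheses (c0 : 0 <= c) (uc : forall k, nrm (u k.+1 - u k) <= c / 2 ^+ k).

Lemma dist_le_geometric m n : (m <= n)%N -> nrm (u n - u m) <= 2 * c / 2 ^+ m.
Proof.
suff tail d : nrm (u (m + d)%N - u m) <= 2 * c / 2 ^+ m - 2 * c / 2 ^+ (m + d).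
  move=> /subnKC <-; have := tail (n - m)%N.
  have : 0 <= 2 * c / 2 ^+ (m + (n - m)) by rewrite divr_ge0 ?mulr_ge0 ?exprn_ge0.
  lra.
elim: d => [|d IH]; first by rewrite addn0 !subrr hnorm0.
have half : 2 * c / 2 ^+ (m + d).+1 = c / 2 ^+ (m + d).
  by rewrite exprS; field; rewrite expf_neq0 // pnatr_eq0.
have := hnorm_distD (u (m + d).+1) (u (m + d)%N) (u m).
by rewrite addnS half; have := uc (m + d); lra.
Qed.

Lemma hconverges_geometric :
  exists l, hconverges ip u l /\ forall m, nrm (l - u m) <= 2 * c / 2 ^+ m.
Proof.
have [l ul] : exists l, hconverges ip u l.
  apply: completeP => e e0; have e2 : 0 < e / 2 by rewrite divr_gt0.
  have [N hN] := div_exp2_lt (2 * c) e2; exists N => n m hn hm.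
  have := hnorm_distD (u n) (u N) (u m); rewrite (hnorm_distC (u N)).
  have := dist_le_geometric hn; have := dist_le_geometric hm.
  by have := hN N (leqnn N); lra.
by exists l; split=> // m; apply: (hconverges_dist_le (N := m) ul) => n; apply: dist_le_geometric.
Qed.

End GeometricIncrements.

Section ClosedSubspace.
Variable A : set H.
Hypothesis closedA : closed_subspace ip A.

Lemma closed_subspace0 : A 0.
Proof. by case: closedA. Qed.

Lemma closed_subspaceD x y : A x -> A y -> A (x + y).
Proof. by case: closedA => _ lin _ Ax Ay; rewrite -[x]scale1r; apply: lin. Qed.

Lemma closed_subspaceZ a x : A x -> A (a *: x).
Proof. by case: closedA => A0 lin _ Ax; rewrite -[_ *: x]addr0; apply: lin. Qed.

Lemma closed_subspaceB x y : A x -> A y -> A (x - y).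
Proof.
by move=> Ax Ay; rewrite -scaleN1r; apply: closed_subspaceD => //; apply: closed_subspaceZ.
Qed.

Lemma closed_subspace_sum (F : nat -> H) n : (forall k, A (F k)) -> A (\sum_(0 <= k < n) F k).
Proof.
move=> AF; elim: n => [|n IH]; first by rewrite big_nil; apply: closed_subspace0.
by rewrite big_nat_recr //=; apply: closed_subspaceD.
Qed.

Lemma closed_subspace_lim u l : (forall n, A (u n)) -> hconverges ip u l -> A l.
Proof. by case: closedA => _ _; apply. Qed.

End ClosedSubspace.

Definition approx_decomposable (A B : set H) (c : R) : Prop :=
  forall y, exists a b, [/\ A a, B b, nrm a <= c * nrm y, nrm b <= c * nrm y
    & nrm (y - a - b) <= nrm y / 2].

Lemma decomposition_of_approximate A B c :
  closed_subspace ip A -> closed_subspace ip B -> 0 <= c -> approx_decomposable A B c ->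
  forall y, exists a b, [/\ A a, B b, y = a + b & nrm a <= 2 * c * nrm y].
Proof.
move=> closedA closedB c0 approx y.
have /choice[f fP] : forall z, exists p : H * H, [/\ A p.1, B p.2,
    nrm p.1 <= c * nrm z, nrm p.2 <= c * nrm z & nrm (z - p.1 - p.2) <= nrm z / 2].
  by move=> z; have [a [b abP]] := approx z; exists (a, b).
pose r k := iter k (fun z => z - (f z).1 - (f z).2) y.
pose a n := \sum_(0 <= k < n) (f (r k)).1.
pose b n := \sum_(0 <= k < n) (f (r k)).2.
have aS n : a n.+1 = a n + (f (r n)).1 by rewrite /a big_nat_recr.
have bS n : b n.+1 = b n + (f (r n)).2 by rewrite /b big_nat_recr.
have r_le k : nrm (r k) <= nrm y / 2 ^+ k.
  elim: k => [|k IH]; first by rewrite expr0 divr1.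
  have [_ _ _ _ /le_trans -> //] := fP (r k).
  by rewrite exprS invfM mulrA mulrAC ler_pM2r ?invr_gt0 // ltr0n.
have cy0 : 0 <= c * nrm y by rewrite mulr_ge0 ?hnorm_ge0.
have [la [ala la_le]] : exists la, hconverges ip a la /\
    forall m, nrm (la - a m) <= 2 * (c * nrm y) / 2 ^+ m.
  apply: hconverges_geometric cy0 _ => k; rewrite aS addrAC subrr add0r.
  have [_ _ fr _ _] := fP (r k); apply: le_trans fr _.
  by rewrite -mulrA ler_wpM2l.
have [lb [blb _]] : exists lb, hconverges ip b lb /\
    forall m, nrm (lb - b m) <= 2 * (c * nrm y) / 2 ^+ m.
  apply: hconverges_geometric cy0 _ => k; rewrite bS addrAC subrr add0r.
  have [_ _ _ fr _] := fP (r k); apply: le_trans fr _.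
  by rewrite -mulrA ler_wpM2l.
exists la, lb; split.
- apply: (closed_subspace_lim closedA _ ala) => n.
  by apply: closed_subspace_sum => // k; case: (fP (r k)).
- apply: (closed_subspace_lim closedB _ blb) => n.
  by apply: closed_subspace_sum => // k; case: (fP (r k)).
- have residual n : a n + b n + r n = y.
    elim: n => [|n IH]; first by rewrite /a /b !big_nil !add0r.
    rewrite aS bS -[RHS]IH /=.
    by rewrite (addrACA (a n)) -(addrA (r n)) -opprD -(addrA (a n + b n)) subrKC.
  have r0 : hconverges ip r 0.
    move=> e e0; have [N hN] := div_exp2_lt (nrm y) e0; exists N => n Nn.
    by rewrite subr0; apply: le_lt_trans (r_le n) (hN n Nn).
  have := hconvergesD (hconvergesD ala blb) r0.
  rewrite addr0 (_ : (fun n => _) = fun=> y); last exact: funext.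
  exact: hconverges_unique (hconverges_cst y).
- by have := la_le 0%N; rewrite /a big_nil subr0 expr0 divr1 mulrA.
Qed.

Definition hclosed (F : set H) : Prop :=
  forall x, ~ F x -> exists2 rho : R, 0 < rho & forall w, nrm (w - x) < rho -> ~ F w.

Lemma ball_avoiding (F : set H) x (r : R) : hclosed F -> 0 < r ->
  ~ (forall w, nrm (w - x) < r -> F w) ->
  exists x' (r' : R), [/\ 0 < r', r' <= r / 2,
    (forall w, nrm (w - x') <= r' -> nrm (w - x) <= r) &
    (forall w, nrm (w - x') <= r' -> ~ F w)].
Proof.
move=> Fcl r0 /existsNP[w0 /not_implyP[w0x nFw0]].
have [rho rho0 rhoF] := Fcl _ nFw0.
pose m := Num.min rho (r - nrm (w0 - x)).
have m_rho : m <= rho by rewrite ge_min lexx.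
have m_r : m <= r - nrm (w0 - x) by rewrite ge_min lexx orbT.
have m0 : 0 < m by rewrite lt_min rho0 subr_gt0.
exists w0, (m / 2); split.
- by rewrite divr_gt0.
- by rewrite ler_pM2r ?invr_gt0 //; have := hnorm_ge0 (w0 - x); lra.
- by move=> w ww0; have := hnorm_distD w w0 x; lra.
- by move=> w ww0; apply: rhoF; lra.
Qed.

(* Cantor's intersection argument: if no [F k] contains a ball, a sequence of nested
   closed balls with radii [2^-k], the [k]-th one avoiding [F k], converges to a point
   outside every [F k]. *)
Lemma baire (F : nat -> set H) : (forall k, hclosed (F k)) -> (forall x, exists k, F k x) ->
  exists k y (r : R), 0 < r /\ forall w, nrm (w - y) < r -> F k w.
Proof.
move=> Fcl Fcov; apply/not_existsP => noball.
have step (p : (H * R) * nat) : exists q : H * R, 0 < p.1.2 ->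
    [/\ 0 < q.2, q.2 <= p.1.2 / 2,
        (forall w, nrm (w - q.1) <= q.2 -> nrm (w - p.1.1) <= p.1.2) &
        (forall w, nrm (w - q.1) <= q.2 -> ~ F p.2 w)].
  case: p => [[x r] k] /=; have [r0|r0] := ltP 0 r; last by exists (x, r) => ?; exfalso; lra.
  have [|x' [r' ?]] := @ball_avoiding (F k) x r (Fcl k) r0; last by exists (x', r').
  by move=> inF; apply: (noball k); exists x, r.
have [g gP] := choice step.
pose c := fix c n := if n is k.+1 then g (c k, k) else ((0 : H), (1 : R)).
have cS k : c k.+1 = g (c k, k) by [].
have c_pos k : 0 < (c k).2.
  by elim: k => [|k IH]; [rewrite ltr01 | rewrite cS; case: (gP (c k, k) IH)].
have c_rad k : (c k).2 <= 1 / 2 ^+ k.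
  elim: k => [|k IH]; first by rewrite expr0 divr1.
  rewrite cS; have [_ /le_trans -> //] := gP (c k, k) (c_pos k).
  by rewrite exprS invfM mulrA mulrAC ler_pM2r ?invr_gt0 // ltr0n.
have nested j m w : nrm (w - (c (j + m)%N).1) <= (c (j + m)%N).2 -> nrm (w - (c j).1) <= (c j).2.
  elim: m w => [|m IH] w; first by rewrite addn0.
  rewrite addnS cS => wc; apply: IH.
  by have [_ _ sub _] := gP (c (j + m)%N, (j + m)%N) (c_pos _); apply: sub.
have center k : nrm ((c k).1 - (c k).1) <= (c k).2 by rewrite subrr hnorm0 ltW.
have [l [cl _]] : exists l, hconverges ip (fun k => (c k).1) l /\
    forall m, nrm (l - (c m).1) <= 2 * 1 / 2 ^+ m.
  apply: hconverges_geometric ler01 _ => k; apply: le_trans (c_rad k).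
  by have := nested k 1%N _ (center _); rewrite addn1.
have l_in j : nrm (l - (c j).1) <= (c j).2.
  by apply: (hconverges_dist_le (N := j) cl) => n /subnKC <-; apply: nested.
have [k Fkl] := Fcov l.
by have [_ _ _] := gP (c k, k) (c_pos k); apply; [rewrite -cS; apply: l_in | ].
Qed.

Section BoundedProjection.
Variables S Z : set H.
Hypotheses (closedS : closed_subspace ip S) (closedZ : closed_subspace ip Z).
Hypothesis sumSZ : forall x, exists s z, [/\ S s, Z z & x = s + z].

(* The closed sets of points approximable by [s + z] with [|s|, |z| <= k] cover [H];
   a ball inside one of them, translated to [0], costs a factor [2] in [k]. *)
Lemma bounded_approx_near0 : exists k r : R, [/\ 0 <= k, 0 < r &
  forall x, nrm x < r -> forall rho, 0 < rho ->
    exists s z, [/\ S s, Z z, nrm s <= k, nrm z <= k & nrm (x - (s + z)) < rho]].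
Proof.
pose F k y := forall rho : R, 0 < rho -> exists s z,
  [/\ S s, Z z, nrm s <= k%:R, nrm z <= k%:R & nrm (y - (s + z)) < rho].
have Fcl k : hclosed (F k).
  move=> x /existsNP[rho /not_implyP[rho0 noapprox]].
  have rho2 : 0 < rho / 2 by rewrite divr_gt0.
  exists (rho / 2) => // w wx Fw; have [s [z [Ss Zz sk zk wsz]]] := Fw _ rho2.
  apply: noapprox; exists s, z; split => //.
  by have := hnorm_distD x w (s + z); rewrite (hnorm_distC x w); lra.
have Fcov x : exists k, F k x.
  have [s [z [Ss Zz ->]]] := sumSZ x.
  have sz0 : 0 <= nrm s + nrm z by rewrite addr_ge0 ?hnorm_ge0.
  have := archi_boundP sz0; have := hnorm_ge0 s; have := hnorm_ge0 z.
  move=> z0 s0 szk; exists (Num.Def.archi_bound (nrm s + nrm z)) => rho rho0.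
  by exists s, z; split => //; [lra | lra | rewrite subrr hnorm0].
have [k [y [r [r0 ball]]]] := baire Fcl Fcov.
exists (2 * k%:R), r; split => // [|x xr rho rho0]; first by rewrite mulr_ge0.
have rho2 : 0 < rho / 2 by rewrite divr_gt0.
have [s1 [z1 [Ss1 Zz1 s1k z1k e1]]] : exists s z, [/\ S s, Z z, nrm s <= k%:R, nrm z <= k%:R
    & nrm (y + x - (s + z)) < rho / 2] by apply: ball rho2; rewrite addrAC subrr add0r.
have [s2 [z2 [Ss2 Zz2 s2k z2k e2]]] : exists s z, [/\ S s, Z z, nrm s <= k%:R, nrm z <= k%:R
    & nrm (y - (s + z)) < rho / 2] by apply: ball rho2; rewrite subrr hnorm0.
exists (s1 - s2), (z1 - z2); split; [exact: closed_subspaceB | exact: closed_subspaceB | | |].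
- by have := hnormD s1 (- s2); rewrite hnormN; lra.
- by have := hnormD z1 (- z2); rewrite hnormN; lra.
have translate : x - (s1 - s2 + (z1 - z2)) = (y + x - (s1 + z1)) - (y - (s2 + z2)).
  rewrite [in RHS]opprB [in RHS](addrC y x) -[in RHS]addrA -[in RHS]addrA [in RHS](addrCA y).
  rewrite (addrC y (_ - y)) subrK; congr (_ + _).
  by rewrite -[s2 + z2]opprK -opprD; congr (- _); rewrite opprD addrACA.
by rewrite translate; have := hnormD (y + x - (s1 + z1)) (- (y - (s2 + z2))); rewrite hnormN; lra.
Qed.

Lemma approx_decomposable_complement : exists c, 0 <= c /\ approx_decomposable S Z c.
Proof.
have [k [r [k0 r0 near0]]] := bounded_approx_near0.
exists (2 * k / r); split => [|y]; first by rewrite divr_ge0 ?mulr_ge0 // ltW.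
have [->|/hnorm_gt0 y0] := eqVneq y 0.
  by exists 0, 0; split; rewrite ?subrr ?hnorm0 ?mulr0 ?mul0r //; apply: closed_subspace0.
pose t := r / (2 * nrm y).
have t0 : 0 < t by rewrite divr_gt0 // mulr_gt0.
have ty : nrm (rscale t y) < r.
  have -> : nrm (rscale t y) = r / 2 by rewrite hnormZ gtr0_norm // /t; field; rewrite gt_eqF.
  lra.
have [s [z [Ss Zz sk zk tysz]]] := near0 _ ty _ (divr_gt0 r0 (ltr0n _ 4)).
have ti : t^-1 = 2 * nrm y / r by rewrite /t invf_div.
have ti0 : 0 <= t^-1 by rewrite invr_ge0 ltW.
have scaled u : nrm u <= k -> nrm (rscale t^-1 u) <= 2 * k / r * nrm y.
  move=> uk; rewrite hnormZ ger0_norm //.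
  have -> : 2 * k / r * nrm y = t^-1 * k by rewrite ti; field; rewrite gt_eqF.
  exact: ler_wpM2l.
exists (rscale t^-1 s), (rscale t^-1 z).
split; [exact: closed_subspaceZ | exact: closed_subspaceZ | exact: scaled | exact: scaled |].
have -> : y - rscale t^-1 s - rscale t^-1 z = rscale t^-1 (rscale t y - (s + z)).
  by rewrite scalerBr scalerA -rmorphM mulVf ?gt_eqF // rmorph1 scale1r scalerDr opprD addrA.
rewrite hnormZ ger0_norm //.
have -> : nrm y / 2 = t^-1 * (r / 4) by rewrite ti; field; rewrite gt_eqF.
by rewrite ler_wpM2l // ltW.
Qed.

Hypothesis meetSZ : S `&` Z = [set 0].

Lemma complement_projection_bounded :
  exists K, 0 <= K /\ forall s z, S s -> Z z -> nrm s <= K * nrm (s + z).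
Proof.
have [c [c0 approx]] := approx_decomposable_complement.
exists (2 * c); split => [|s z Ss Zz]; first by rewrite mulr_ge0.
have [a [b [Sa Zb sz_ab a_le]]] := decomposition_of_approximate closedS closedZ c0 approx (s + z).
suff sa : s = a by rewrite {1}sa.
have sa_bz : s - a = b - z by apply/eqP; rewrite subr_eq addrAC (addrC b) -sz_ab addrK.
have : (S `&` Z) (s - a).
  by split; [exact: closed_subspaceB | rewrite sa_bz; exact: closed_subspaceB].
by rewrite meetSZ => /eqP; rewrite subr_eq0 => /eqP.
Qed.

End BoundedProjection.

Section BoundedOperator.
Variable T : H -> H.
Hypothesis boundedT : bounded_op ip T.

Lemma bounded_op_linear a x y : T (a *: x + y) = a *: T x + T y.
Proof. by case: boundedT. Qed.

Lemma bounded_op0 : T 0 = 0.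
Proof.
have := bounded_op_linear 1 0 0; rewrite !scale1r addr0 => T0.
by apply: (@addrI _ (T 0)); rewrite addr0 -T0.
Qed.

Lemma bounded_opD x y : T (x + y) = T x + T y.
Proof. by rewrite -[x]scale1r bounded_op_linear !scale1r. Qed.

Lemma bounded_opZ a x : T (a *: x) = a *: T x.
Proof. by rewrite -[a *: x]addr0 bounded_op_linear bounded_op0 addr0. Qed.

Lemma bounded_opB x y : T (x - y) = T x - T y.
Proof. by rewrite bounded_opD -scaleN1r bounded_opZ scaleN1r. Qed.

Lemma bounded_op_le : exists M, 0 <= M /\ forall x, nrm (T x) <= M * nrm x.
Proof.
case: boundedT => _ [M TM]; exists `|M|; split => // x.
by apply: le_trans (TM x) _; rewrite ler_wpM2r ?hnorm_ge0 ?ler_norm.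
Qed.

Lemma hconverges_bounded_op u l : hconverges ip u l -> hconverges ip (fun n => T (u n)) (T l).
Proof.
have [M [M0 TM]] := bounded_op_le => ul e e0.
have eM : 0 < e / (M + 1) by rewrite divr_gt0 // ltr_wpDl.
have [N uN] := ul _ eM; exists N => n Nn; rewrite -bounded_opB.
apply: le_lt_trans (TM _) _; apply: le_lt_trans (_ : M * nrm (u n - l) <= M * (e / (M + 1))) _.
  by rewrite ler_wpM2l // ltW // uN.
by rewrite mulrCA gtr_pMr // ltr_pdivrMr ?ltr_wpDl // mul1r ltrDl.
Qed.

Lemma opnorm_le x : nrm (T x) <= opnorm ip T * nrm x.
Proof.
have [M [M0 TM]] := bounded_op_le.
have supT : has_sup [set nrm (T y) | y in [set y | nrm y <= 1]].
  split; first by exists (nrm (T 0)), 0 => //=; rewrite hnorm0 ler01.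
  exists M => _ [y /= y1 <-]; apply: le_trans (TM y) _.
  by rewrite -[leRHS]mulr1 ler_wpM2l.
have [->|/hnorm_gt0 x0] := eqVneq x 0; first by rewrite bounded_op0 hnorm0 mulr0.
pose x1 := rscale (nrm x)^-1 x.
have x1_le : nrm x1 <= 1 by rewrite hnormZ gtr0_norm ?invr_gt0 // mulVf ?gt_eqF.
have := sup_upper_bound supT (ex_intro2 _ _ x1 x1_le erefl).
rewrite bounded_opZ hnormZ gtr0_norm ?invr_gt0 // mulrC ler_pdivrMr //.
Qed.

End BoundedOperator.

Lemma bounded_op_sub T U : bounded_op ip T -> bounded_op ip U ->
  bounded_op ip (fun x => T x - U x).
Proof.
move=> boundedT boundedU; split=> [a x y|].
  by rewrite (bounded_op_linear boundedT) (bounded_op_linear boundedU) opprD addrACA scalerBr.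
have [[M [M0 TM]] [N [N0 UN]]] := (bounded_op_le boundedT, bounded_op_le boundedU).
exists (M + N) => x; have := hnormD (T x) (- U x); rewrite hnormN mulrDl.
by have := TM x; have := UN x; lra.
Qed.

Section Projection.
Variable P : H -> H.
Hypothesis projP : is_proj ip P.

Lemma proj_bounded : bounded_op ip P.
Proof. by case: projP. Qed.

Lemma projK x : P (P x) = P x.
Proof. by case: projP. Qed.

Lemma ranP y : ran P y <-> P y = y.
Proof. by split => [[x _ <-]|Py]; [rewrite projK | exists y]. Qed.

Lemma closed_subspace_ran : closed_subspace ip (ran P).
Proof.
split.
- by apply/ranP; rewrite (bounded_op0 proj_bounded).
- move=> a x y /ranP Px /ranP Py; apply/ranP.
  by rewrite (bounded_op_linear proj_bounded) Px Py.
- move=> u l ranu ul; apply/ranP.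
  apply: hconverges_unique (hconverges_bounded_op proj_bounded ul) _.
  by rewrite (_ : (fun n => P (u n)) = u) //; apply: funext => n; apply/ranP.
Qed.

End Projection.

Definition complement (S Z : set H) : Prop :=
  S `&` Z = [set 0] /\ forall x, exists s z, [/\ S s, Z z & x = s + z].

Section Perturbation.
Variables (P P' : H -> H) (Z : set H) (K d : R).
Hypotheses (projP : is_proj ip P) (projP' : is_proj ip P') (closedZ : closed_subspace ip Z).
Hypotheses (K0 : 0 <= K) (d0 : 0 <= d) (Kd : (K + 1) * d <= 1 / 2).
Hypothesis ranP_bounded : forall s z, ran P s -> Z z -> nrm s <= K * nrm (s + z).
Hypothesis P'_near : forall x, nrm (P' x - P x) <= d * nrm x.

Lemma perturbed_meet : ran P' `&` Z = [set 0].
Proof.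
apply/seteqP; split => [y [/(ranP projP') P'y Zy]|_ ->] /=; last first.
  split; last exact: closed_subspace0.
  by apply/(ranP projP'); rewrite (bounded_op0 (proj_bounded projP')).
have Py_le : nrm (P y) <= K * nrm (y - P y).
  rewrite hnorm_distC -[P y - y]/(P y + - y).
  apply: ranP_bounded; first by apply/(ranP projP); rewrite (projK projP).
  by rewrite -scaleN1r; apply: closed_subspaceZ.
have yPy_le : nrm (y - P y) <= d * nrm y by rewrite -{1}P'y.
apply: hnorm_le0; have := hnorm_distD y (P y) 0; rewrite !subr0.
have := ler_wpM2l K0 yPy_le; have := ler_wpM2r (hnorm_ge0 y) Kd; have := hnorm_ge0 y.
nra.
Qed.

(* For [y = s + z] the pair [(P' s, z)] leaves the error [s - P' s], of norm
   [<= d |s| <= d K |y|]. *)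
Lemma perturbed_approx : (forall x, exists s z, [/\ ran P s, Z z & x = s + z]) ->
  approx_decomposable (ran P') Z (K + 1).
Proof.
move=> sumPZ y; have [s [z [Ss Zz ->]]] := sumPZ y; have /(ranP projP) Ps := Ss.
have s_le := ranP_bounded Ss Zz.
have P's_le : nrm (P' s - s) <= d * nrm s by rewrite -{2}Ps.
have := ler_wpM2l d0 s_le; have := ler_wpM2r (hnorm_ge0 (s + z)) Kd.
have := hnorm_ge0 (s + z); have := mulr_ge0 d0 (hnorm_ge0 (s + z)) => dsz0 sz0 Kd_sz ds_le.
exists (P' s), z; split.
- by apply/(ranP projP'); rewrite (projK projP').
- exact: Zz.
- by have := hnorm_distD (P' s) s 0; rewrite !subr0; nra.
- by have := hnormD (s + z) (- s); rewrite hnormN addrAC subrr add0r; nra.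
- by rewrite addrAC addrK hnorm_distC; nra.
Qed.

End Perturbation.

Lemma complement_stable P Z : is_proj ip P -> closed_subspace ip Z -> complement (ran P) Z ->
  exists2 eps : R, 0 < eps & forall P', is_proj ip P' ->
    opnorm ip (fun x => P' x - P x) < eps -> complement (ran P') Z.
Proof.
move=> projP closedZ [meetPZ sumPZ].
have [K [K0 ranP_bounded]] :=
  complement_projection_bounded (closed_subspace_ran projP) closedZ sumPZ meetPZ.
have K1 : 0 < K + 1 by rewrite ltr_wpDl.
exists (1 / (2 * (K + 1))) => [|P' projP' P'P]; first by rewrite divr_gt0 ?mulr_gt0.
have P'_near x : nrm (P' x - P x) <= 1 / (2 * (K + 1)) * nrm x.
  apply: le_trans (opnorm_le (bounded_op_sub (proj_bounded projP') (proj_bounded projP)) x) _.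
  by rewrite ler_wpM2r ?hnorm_ge0 ?ltW.
have Kd : (K + 1) * (1 / (2 * (K + 1))) <= 1 / 2.
  by rewrite le_eqVlt; apply/orP; left; apply/eqP; field; rewrite gt_eqF.
have d0 : 0 <= 1 / (2 * (K + 1)) by rewrite ltW // divr_gt0 ?mulr_gt0.
split; first exact: perturbed_meet projP projP' closedZ K0 Kd ranP_bounded P'_near.
have approx := perturbed_approx projP projP' d0 Kd ranP_bounded P'_near sumPZ.
move=> x; have [t [z [? ? ? _]]] :=
  decomposition_of_approximate (closed_subspace_ran projP') closedZ (ltW K1) approx x.
by exists t, z.
Qed.

End InnerProductSpace.

Theorem mainTheorem3 (R : realType) (H : lmodType R[i]) (ip : H -> H -> R[i]) :
  separable_inf_dim_hilbert ip ->
  open_in_proj_pairs ip (Delta ip).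
Proof.
case=> ipP completeP _ _ P Q [projP projQ [Z [closedZ meetPZ meetQZ sumPZ sumQZ]]].
have [epsP epsP0 stableP] := complement_stable ipP completeP projP closedZ (conj meetPZ sumPZ).
have [epsQ epsQ0 stableQ] := complement_stable ipP completeP projQ closedZ (conj meetQZ sumQZ).
exists (Num.min epsP epsQ); split => [|P' Q' projP' projQ']; first by rewrite lt_min epsP0.
rewrite !lt_min => /andP[/(stableP _ projP')[meetP'Z sumP'Z] _].
move=> /andP[_ /(stableQ _ projQ')[meetQ'Z sumQ'Z]].
by split => //; exists Z; split.
Qed.
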